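(* Let $\Omega\subset\mathbb{R}^N$ ($N\le 3$) be a smooth bounded domain whose principal Dirichlet eigenvalue $\Lambda_1$ of $-\Delta$ satisfies $\Lambda_1<1$, let $n\ge 3$ and $\mu_1\le\mu_2\le\dots\le\mu_n$ be real constants, and consider, for $\beta\in\mathbb{R}$, the system $$-\Delta u_j-u_j=\mu_ju_j^3+\beta\sum_{k\ne j}u_k^2u_j,\quad u_j>0 \text{ in }\Omega,\quad u_j=0\text{ on }\partial\Omega,\qquad j=1,\dots,n.$$ Define the interval (or union of intervals) $I$ by: $I=(-\infty,\bar\beta)$ in the focusing case; $I=(-\infty,\mu_1)\cup(\mu_n,\bar\beta)$ in the defocusing case; $I=(-\infty,\mu_1)$ in all mixed cases. Then for every $\beta\in I$ the system has a synchronized solution $\mathbf u(\beta)=(u_1,\dots,u_n)\in[H_0^1(\Omega)]^n$, and this synchronized solution is uniquely determined. These solutions form the synchronized solution branch $$\mathcal T_\omega=\{(\beta,\alpha_1(\beta)\omega,\dots,\alpha_n(\beta)\omega):\beta\in I\},\qquad \alpha_j(\beta)=\big((\beta-\mu_j)g(\beta)\big)^{-1/2}.$$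
   Context: $\omega\in H_0^1(\Omega)$ denotes the unique positive (and non-degenerate) solution of $-\Delta\omega-\omega=-\omega^3$. A solution $(u_1,\dots,u_n)$ is called synchronized if $u_j=\alpha_j\omega$ with constants $\alpha_j>0$ for all $j$. Let $g(\beta)=1+\beta\sum_{j=1}^n\frac{1}{\mu_j-\beta}$ for $\beta\notin\{\mu_1,\dots,\mu_n\}$. The system is called focusing if $0<\mu_1\le\dots\le\mu_n$, defocusing if $\mu_1\le\dots\le\mu_n<0$, and mixed otherwise. In the focusing case $\bar\beta$ denotes the unique zero of $g$ in $(-\infty,0)$; in the defocusing case $\bar\beta$ denotes the unique zero of $g$ in $(\mu_n,\infty)$. *)

From HB Require Import structures.
From mathcomp Require Import all_boot all_order all_algebra.
From mathcomp Require Import all_classical all_reals all_analysis.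
Set Implicit Arguments. Unset Strict Implicit. Unset Printing Implicit Defensive.
Import Order.TTheory GRing.Theory Num.Theory.
Import numFieldNormedType.Exports.
Local Open Scope classical_set_scope.
Local Open Scope ring_scope.

Section Defs.
Variable R : realType.

Definition basis_vec (N : nat) (i : 'I_N) : 'rV[R]_N := delta_mx 0 i.

Definition laplacian (N : nat) (u : 'rV[R]_N -> R) (x : 'rV[R]_N) : R :=
  \sum_(i < N) 'D_(basis_vec i) ('D_(basis_vec i) u) x.

Definition twice_diff_on (N : nat) (Om : set 'rV[R]_N) (u : 'rV[R]_N -> R) :=
  forall x, Om x ->
    differentiable u x /\
    forall i : 'I_N, differentiable ('D_(basis_vec i) u) x.

Definition dirichlet0 (N : nat) (Om : set 'rV[R]_N) (u : 'rV[R]_N -> R) :=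
  {within closure Om, continuous u} /\
  forall x, closure Om x -> ~ Om x -> u x = 0.

Definition is_solution (N n : nat) (Om : set 'rV[R]_N) (mu : 'I_n -> R) (beta : R)
    (u : 'I_n -> 'rV[R]_N -> R) : Prop :=
  forall j : 'I_n,
    twice_diff_on Om (u j) /\ dirichlet0 Om (u j) /\
    (forall x, Om x -> 0 < u j x) /\
    (forall x, Om x ->
       - laplacian (u j) x - u j x
       = mu j * u j x ^+ 3 + beta * \sum_(k < n | k != j) u k x ^+ 2 * u j x).

Definition synchronized (N n : nat) (omega : 'rV[R]_N -> R) (u : 'I_n -> 'rV[R]_N -> R) :=
  exists alpha : 'I_n -> R, (forall j, 0 < alpha j) /\ (forall j, u j = (fun x => alpha j * omega x)).

Definition gfun (n : nat) (mu : 'I_n -> R) (beta : R) : R :=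
  1 + beta * \sum_(j < n) (mu j - beta)^-1.

Definition focusing (n : nat) (mu : 'I_n -> R) := forall j, 0 < mu j.
Definition defocusing (n : nat) (mu : 'I_n -> R) := forall j, mu j < 0.

Definition betabar_foc (n : nat) (mu : 'I_n -> R) : R :=
  xget 0 [set b : R | b < 0 /\ gfun mu b = 0].
Definition betabar_defoc (n : nat) (mu : 'I_n -> R) (mun : R) : R :=
  xget 0 [set b : R | mun < b /\ gfun mu b = 0].

Definition mu_first (n : nat) (mu : 'I_n -> R) : R := head 0 [seq mu i | i <- enum 'I_n].
Definition mu_last (n : nat) (mu : 'I_n -> R) : R := last 0 [seq mu i | i <- enum 'I_n].

Definition in_I (n : nat) (mu : 'I_n -> R) (beta : R) : Prop :=
  let mu1 := mu_first mu in let mun := mu_last mu in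
  if `[< focusing mu >] then is_true (beta < betabar_foc mu)
  else if `[< defocusing mu >] then beta < mu1 \/ (mun < beta /\ beta < betabar_defoc mu mun)
  else beta < mu1.

Definition alpha_branch (n : nat) (mu : 'I_n -> R) (beta : R) (j : 'I_n) : R :=
  ((beta - mu j) * gfun mu beta) `^ (- 2^-1).

End Defs.

From HB Require Import structures.
From mathcomp Require Import all_boot all_order all_algebra.
From mathcomp Require Import all_classical all_reals all_analysis.
From mathcomp Require Import ring lra.
Set Implicit Arguments. Unset Strict Implicit. Unset Printing Implicit Defensive.
Import Order.TTheory GRing.Theory Num.Theory.
Import numFieldNormedType.Exports.
Local Open Scope classical_set_scope.
Local Open Scope ring_scope.

(** Since [omega] solves the scalar problem, the ansatz [u_j = a_j omega]
    turns the system into the linear system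
    [mu_j a_j^2 + beta sum_(k <> j) a_k^2 = -1] for the unknowns [a_j^2].
    It is a rank-one perturbation of the diagonal system with entries
    [mu_j - beta], hence uniquely solvable when [g(beta) <> 0], with solution
    [a_j^2 = ((beta - mu_j) g(beta))^-1].  A synchronized solution therefore
    exists, and is unique, as soon as every [(beta - mu_j) g(beta)] is
    positive.  On each piece of [I] this sign condition follows from the
    sign of [g]: [g < 0] below [min mu_j] when [min mu_j <= 0], and otherwise
    from the monotonicity of [g] between its poles together with
    [g(bar beta) = 0]; that [bar beta] exists at all is the intermediate
    value theorem between [g(0) = 1] and a point where [g < 0]. *)

(** This holds without any differentiability of [f], because a
    non-existing directional derivative is [0] on both sides. *)
Lemma deriveMl_any (R : realType) (V : normedModType R) (f : V -> R) (c : R) v x :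
  'D_v (fun y => c * f y) x = c * 'D_v f x.
Proof.
have [df|ndf] := pselect (derivable f x v); first by rewrite -deriveMl.
have [->|c0] := eqVneq c 0.
  under eq_fun do rewrite mul0r.
  by rewrite derive_cst mul0r.
have ndcf : ~ derivable (fun y => c * f y) x v.
  move=> dcf; apply: ndf.
  have -> : f = (fun y => c^-1 * (c * f y)).
    by apply/funext => y; rewrite mulrA mulVf // mul1r.
  exact: derivableM.
by rewrite /derive (dvgP ndf) (dvgP ndcf) /= mulr0.
Qed.

Section Scaling.
Variables (R : realType) (N : nat) (Om : set 'rV[R]_N).

Lemma deriveMl_fun (c : R) (f : 'rV[R]_N -> R) v :
  'D_v (fun y => c * f y) = (fun y => c * 'D_v f y).
Proof. by apply/funext => y; rewrite deriveMl_any. Qed.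

Lemma laplacianZ (c : R) (f : 'rV[R]_N -> R) x :
  laplacian (fun y => c * f y) x = c * laplacian f x.
Proof.
rewrite /laplacian mulr_sumr; apply: eq_bigr => i _.
by rewrite deriveMl_fun deriveMl_any.
Qed.

Lemma twice_diff_onZ (c : R) (f : 'rV[R]_N -> R) :
  twice_diff_on Om f -> twice_diff_on Om (fun y => c * f y).
Proof.
move=> fdiff x Omx; have [df ddf] := fdiff x Omx; split.
  exact/differentiableM.
by move=> i; rewrite deriveMl_fun; exact/differentiableM.
Qed.

Lemma dirichlet0Z (c : R) (f : 'rV[R]_N -> R) :
  dirichlet0 Om f -> dirichlet0 Om (fun y => c * f y).
Proof.
move=> [fcont f0]; split; last by move=> x clx Omx; rewrite f0 // mulr0.
by move=> x; apply: cvgM; [exact: cvg_cst | exact: fcont].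
Qed.

End Scaling.

Lemma sumr_except (R : zmodType) (I : finType) (F : I -> R) j :
  \sum_(k | k != j) F k = \sum_k F k - F j.
Proof. by rewrite [in RHS](bigD1 j) //= addrC addrK. Qed.

Section SynchronizedReduction.
Variables (R : realType) (N : nat) (Om : set 'rV[R]_N) (omega : 'rV[R]_N -> R).
Hypothesis omega_diff : twice_diff_on Om omega.
Hypothesis omega_bc : dirichlet0 Om omega.
Hypothesis omega_pos : forall x, Om x -> 0 < omega x.
Hypothesis omega_eq :
  forall x, Om x -> - laplacian omega x - omega x = - omega x ^+ 3.
Hypothesis Om_neq0 : Om !=set0.
Variables (n : nat) (mu : 'I_n -> R) (beta : R).

Lemma scaled_equation_iff (a : 'I_n -> R) j x : Om x -> a j != 0 ->
  (- laplacian (fun y => a j * omega y) x - a j * omega x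
     = mu j * (a j * omega x) ^+ 3
       + beta * \sum_(k < n | k != j) (a k * omega x) ^+ 2 * (a j * omega x))
  <-> mu j * a j ^+ 2 + beta * \sum_(k < n | k != j) a k ^+ 2 = -1.
Proof.
move=> Omx aj0.
have lhsE : - laplacian (fun y => a j * omega y) x - a j * omega x
            = a j * omega x ^+ 3 * -1.
  rewrite laplacianZ.
  transitivity (a j * (- laplacian omega x - omega x)); first ring.
  by rewrite omega_eq //; ring.
have rhsE : mu j * (a j * omega x) ^+ 3
              + beta * \sum_(k < n | k != j) (a k * omega x) ^+ 2 * (a j * omega x)
            = a j * omega x ^+ 3
              * (mu j * a j ^+ 2 + beta * \sum_(k < n | k != j) a k ^+ 2).
  have -> : \sum_(k < n | k != j) (a k * omega x) ^+ 2 * (a j * omega x)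
            = a j * omega x ^+ 3 * \sum_(k < n | k != j) a k ^+ 2.
    by rewrite mulr_sumr; apply: eq_bigr => k _; ring.
  ring.
have nz : a j * omega x ^+ 3 != 0 by rewrite mulf_neq0 // expf_neq0 // gt_eqF ?omega_pos.
by rewrite lhsE rhsE; split => [/(mulfI nz)/esym | ->].
Qed.

Lemma is_solution_scaled (a : 'I_n -> R) : (forall j, 0 < a j) ->
  is_solution Om mu beta (fun j x => a j * omega x)
  <-> forall j, mu j * a j ^+ 2 + beta * \sum_(k < n | k != j) a k ^+ 2 = -1.
Proof.
move=> a_gt0; have aj0 j : a j != 0 by rewrite gt_eqF.
split=> [sol j | alg j].
  have [x0 Omx0] := Om_neq0; have [_ [_ [_ eq_j]]] := sol j.
  exact/(scaled_equation_iff Omx0 (aj0 j))/eq_j.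
split; first exact: twice_diff_onZ.
split; first exact: dirichlet0Z.
split; first by move=> x Omx; rewrite mulr_gt0 ?omega_pos.
by move=> x Omx; apply/(scaled_equation_iff Omx (aj0 j)).
Qed.

End SynchronizedReduction.

Definition alpha2_branch {R : realType} {n : nat} (mu : 'I_n -> R) (beta : R) j :=
  ((beta - mu j) * gfun mu beta)^-1.

Section LinearSystem.
Variables (R : realType) (n : nat) (mu : 'I_n -> R) (beta : R).
Hypothesis mu_beta_neq0 : forall j, mu j - beta != 0.
Hypothesis gfun_neq0 : gfun mu beta != 0.
Let A := alpha2_branch mu beta.

Lemma alpha2_branch_solves j :
  mu j * A j + beta * \sum_(k < n | k != j) A k = -1.
Proof.
have g0 := gfun_neq0; have mb0 := mu_beta_neq0.
have bmu_neq0 k : beta - mu k != 0 by rewrite -opprB oppr_eq0.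
have sumA : beta * \sum_k A k = - (gfun mu beta)^-1 * (gfun mu beta - 1).
  have -> : \sum_k A k = - (gfun mu beta)^-1 * \sum_k (mu k - beta)^-1.
    rewrite mulr_sumr; apply: eq_bigr => k _.
    by rewrite /A /alpha2_branch; field; rewrite g0 mb0 bmu_neq0.
  rewrite [X in _ * (X - 1)]/gfun; ring.
rewrite sumr_except mulrBr sumA /A /alpha2_branch.
by field; rewrite g0 bmu_neq0.
Qed.

(** The differences [d = a - A] satisfy [(mu_j - beta) d_j = - beta sum_k d_k];
    summing [d_j] over [j] gives [g(beta) sum_k d_k = 0]. *)
Lemma alpha2_branch_unique (a : 'I_n -> R) :
  (forall j, mu j * a j + beta * \sum_(k < n | k != j) a k = -1) -> a = A.
Proof.
move=> a_solves; pose d k := a k - A k.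
have d_eq j : (mu j - beta) * d j + beta * \sum_k d k = 0.
  have := a_solves j; have := alpha2_branch_solves j.
  rewrite !sumr_except /d sumrB => eA ea.
  transitivity ((mu j * a j + beta * (\sum_i a i - a j))
                - (mu j * A j + beta * (\sum_i A i - A j))); first ring.
  by rewrite ea eA subrr.
have dE j : d j = - beta * (\sum_k d k) / (mu j - beta).
  apply: (mulfI (mu_beta_neq0 j)); rewrite [RHS]mulrC divfK //.
  by have := d_eq j; lra.
have sum_d0 : \sum_k d k = 0.
  have : (\sum_k d k) * gfun mu beta = 0.
    rewrite /gfun mulrDr mulr1.
    rewrite {1}(eq_bigr _ (fun k _ => dE k)) -mulr_sumr; ring.
  by move/eqP; rewrite mulf_eq0 (negbTE gfun_neq0) orbF => /eqP.
apply/funext => j; apply/eqP; rewrite -subr_eq0; apply/eqP.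
by rewrite -/(d j) dE sum_d0 mulr0 mul0r.
Qed.

End LinearSystem.

Lemma alpha_branch_sqr (R : realType) (n : nat) (mu : 'I_n -> R) beta j :
  0 < (beta - mu j) * gfun mu beta ->
  alpha_branch mu beta j ^+ 2 = alpha2_branch mu beta j.
Proof.
move=> rad_gt0; rewrite /alpha_branch powRN powR12_sqrt ?ltW //.
by rewrite exprVn sqr_sqrtr // ltW.
Qed.

Section GfunSign.
Variables (R : realType) (n : nat) (mu : 'I_n -> R).

Lemma gfunE b : gfun mu b = 1 + \sum_k b / (mu k - b).
Proof. by rewrite /gfun mulr_sumr. Qed.

Lemma gfun0 : gfun mu 0 = 1.
Proof. by rewrite /gfun mul0r addr0. Qed.

Lemma gfunB b c : (forall k, mu k != b) -> (forall k, mu k != c) ->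
  gfun mu c - gfun mu b = (c - b) * \sum_k mu k / ((mu k - b) * (mu k - c)).
Proof.
move=> mub muc; rewrite !gfunE opprD addrACA subrr add0r -sumrB mulr_sumr.
apply: eq_bigr => k _; have := mub k; have := muc k.
rewrite -subr_eq0 => mc; rewrite -subr_eq0 => mb.
by field; rewrite mc mb.
Qed.

Lemma gfun_continuous x : (forall k, mu k != x) -> {for x, continuous (gfun mu)}.
Proof.
move=> mux.
have inv_cont k : {for x, continuous (fun b : R => (mu k - b)^-1)}.
  apply: cvgV; first by rewrite subr_eq0 mux.
  by apply: cvgB; [exact: cvg_cst | exact: cvg_id].
have sum_cont : {for x, continuous (fun b => \sum_k (mu k - b)^-1)}.
  rewrite (_ : (fun b => _) = \sum_k (fun b => (mu k - b)^-1)); last first.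
    by apply/funext => b; rewrite fct_sumE.
  apply: (big_ind (fun f : R -> R => {for x, continuous f})) => //.
  - exact: cst_continuous.
  - by move=> f h fx hx; apply: cvgD.
apply: cvgD; first exact: cvg_cst.
by apply: cvgM; [exact: cvg_id | exact: sum_cont].
Qed.

Lemma gfun_root_between a b : a <= b -> (forall k x, a <= x <= b -> mu k != x) ->
  gfun mu a <= 0 <= gfun mu b \/ gfun mu b <= 0 <= gfun mu a ->
  exists2 c, a <= c <= b & gfun mu c = 0.
Proof.
move=> ab mu_out sign_change.
have [c] : exists2 c, c \in `[a, b] & gfun mu c = 0.
  apply: IVT => //.
    apply: continuous_in_subspaceT => x /set_mem /= xab.
    by apply: gfun_continuous => k; apply: mu_out.
  rewrite ge_min le_max.
  by case: sign_change => /andP[-> ->]; rewrite ?orbT.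
by rewrite in_itv /=; exists c.
Qed.

Hypothesis n_ge3 : (3 <= n)%N.
Let n_gt0 : (0 < n)%N := leq_trans (isT : (0 < 3)%N) n_ge3.

(** This is where [n >= 3] is needed. *)
Lemma gfun_lt0_halves x : (forall k, x / (mu k - x) <= - 2^-1) -> gfun mu x < 0.
Proof.
move=> term_le; rewrite gfunE.
have : \sum_k x / (mu k - x) <= \sum_(k < n) (- 2^-1 : R) by apply: ler_sum.
rewrite sumr_const card_ord -mulr_natl.
have : 3 <= n%:R :> R by rewrite (ler_nat R 3 n).
lra.
Qed.

Lemma sumr_ord_gt0 (F : 'I_n -> R) : (forall k, 0 < F k) -> 0 < \sum_k F k.
Proof.
move=> F_gt0; rewrite (bigD1 (Ordinal n_gt0)) //=.
by rewrite ltr_pwDl // sumr_ge0 // => k _; exact: ltW.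
Qed.

Hypothesis mu_sorted : forall i j : 'I_n, (i <= j)%N -> mu i <= mu j.

Let n_pred_lt : (n.-1 < n)%N. Proof. by rewrite ltn_predL. Qed.
Let i_first : 'I_n := Ordinal n_gt0.
Let i_last : 'I_n := Ordinal n_pred_lt.

Lemma mu_firstE : mu_first mu = mu i_first.
Proof.
rewrite /mu_first -nth0 (nth_map i_first) ?size_enum_ord //.
by congr mu; apply: val_inj; exact: nth_enum_ord.
Qed.

Lemma mu_lastE : mu_last mu = mu i_last.
Proof.
rewrite /mu_last -nth_last (nth_map i_first) size_map size_enum_ord //.
by congr mu; apply: val_inj; exact: nth_enum_ord.
Qed.

Lemma mu_first_le k : mu i_first <= mu k.
Proof. exact: mu_sorted. Qed.

Lemma mu_last_ge k : mu k <= mu i_last.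
Proof. by apply: mu_sorted; rewrite /= -ltnS prednK. Qed.

Lemma i_first_neq_last : i_first != i_last.
Proof. by rewrite -(inj_eq val_inj) /=; move: n_ge3; case: (n) => [|[|[|m]]]. Qed.

Lemma gfun_lt0_below_first beta : beta < mu i_first -> mu i_first <= 0 ->
  gfun mu beta < 0.
Proof.
move=> lt_first first_le0.
have muk_gt k : 0 < mu k - beta by have := mu_first_le k; lra.
have term_lt0 k : beta / (mu k - beta) < 0 by rewrite pmulr_llt0 ?invr_gt0 //; lra.
have term_first : beta / (mu i_first - beta) <= -1 by rewrite ler_pdivrMr //; lra.
have rest_le0 : \sum_(k | (k != i_first) && (k != i_last)) beta / (mu k - beta) <= 0.
  by apply: sumr_le0 => k _; exact: ltW.
rewrite gfunE (bigD1 i_first) //= (bigD1 i_last) /=; last by rewrite eq_sym i_first_neq_last.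
by have := term_lt0 i_last; lra.
Qed.

Lemma betabar_foc_spec : focusing mu ->
  betabar_foc mu < 0 /\ gfun mu (betabar_foc mu) = 0.
Proof.
move=> foc; apply: (@xgetPex _ 0 [set b : R | b < 0 /\ gfun mu b = 0]).
have last_gt0 := foc i_last.
have g_lt0 : gfun mu (- mu i_last) < 0.
  apply: gfun_lt0_halves => k; have := mu_last_ge k; have := foc k => muk_gt0 muk_le.
  by rewrite ler_pdivrMr; lra.
have [c /andP[_ c_le0] gc0] : exists2 c, - mu i_last <= c <= 0 & gfun mu c = 0.
  apply: gfun_root_between; first lra.
    by move=> k x /andP[_ x_le0]; apply/eqP => e; have := foc k; lra.
  by left; rewrite gfun0; apply/andP; split; lra.
exists c; split => //; rewrite lt_neqAle c_le0 andbT.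
by apply/eqP => c0; move: gc0; rewrite c0 gfun0; lra.
Qed.

Lemma betabar_defoc_spec : defocusing mu ->
  mu i_last < betabar_defoc mu (mu i_last)
  /\ gfun mu (betabar_defoc mu (mu i_last)) = 0.
Proof.
move=> defoc; apply: (@xgetPex _ 0 [set b : R | mu i_last < b /\ gfun mu b = 0]).
have first_lt0 := defoc i_first; have last_lt0 := defoc i_last.
have g_lt0 : gfun mu (- mu i_first) < 0.
  apply: gfun_lt0_halves => k; have := mu_first_le k; have := defoc k => muk_lt0 muk_ge.
  by rewrite ler_ndivrMr; lra.
have [c /andP[c_ge0 _] gc0] : exists2 c, 0 <= c <= - mu i_first & gfun mu c = 0.
  apply: gfun_root_between; first lra.
    by move=> k x /andP[x_ge0 _]; apply/eqP => e; have := defoc k; lra.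
  by right; rewrite gfun0; apply/andP; split; lra.
exists c; split => //.
suff : c != 0 by rewrite neq_lt; lra.
by apply/eqP => c0; move: gc0; rewrite c0 gfun0; lra.
Qed.

Lemma gfun_lt0_focusing beta : focusing mu -> beta < betabar_foc mu ->
  beta < 0 /\ gfun mu beta < 0.
Proof.
move=> foc lt_bb; have [bb_lt0 g_bb] := betabar_foc_spec foc.
have mu_neq x k : x < 0 -> mu k != x by move=> x_lt0; apply/eqP => e; have := foc k; lra.
have := gfunB (fun k => mu_neq beta k (lt_trans lt_bb bb_lt0)) (fun k => mu_neq _ k bb_lt0).
have S_gt0 : 0 < \sum_k mu k / ((mu k - beta) * (mu k - betabar_foc mu)).
  apply: sumr_ord_gt0 => k; have := foc k => muk_gt0.
  by apply: divr_gt0 => //; apply: mulr_gt0; lra.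
rewrite g_bb; split; [lra | nra].
Qed.

Lemma gfun_gt0_defocusing beta : defocusing mu -> mu i_last < beta ->
  beta < betabar_defoc mu (mu i_last) -> 0 < gfun mu beta.
Proof.
move=> defoc gt_last lt_bb; have [bb_gt g_bb] := betabar_defoc_spec defoc.
have mu_neq x k : mu i_last < x -> mu k != x.
  by move=> x_gt; apply/eqP => e; have := mu_last_ge k; lra.
have := gfunB (fun k => mu_neq beta k gt_last) (fun k => mu_neq _ k bb_gt).
have S_lt0 : 0 < - \sum_k mu k / ((mu k - beta) * (mu k - betabar_defoc mu (mu i_last))).
  rewrite -sumrN; apply: sumr_ord_gt0 => k.
  have := defoc k; have := mu_last_ge k => muk_le muk_lt0.
  by rewrite oppr_gt0 pmulr_llt0 // invr_gt0; nra.
rewrite g_bb; nra.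
Qed.

Lemma alpha_radicand_gt0 beta : in_I mu beta ->
  forall j, 0 < (beta - mu j) * gfun mu beta.
Proof.
rewrite /in_I /= mu_firstE mu_lastE.
case: asboolP => [foc lt_bb j | not_foc].
  by have [beta_lt0 g_lt0] := gfun_lt0_focusing foc lt_bb; have := foc j; nra.
case: asboolP => [defoc [lt_first | [gt_last lt_bb]] j | not_defoc lt_first j].
- have := gfun_lt0_below_first lt_first (ltW (defoc i_first)).
  by have := mu_first_le j; nra.
- have := gfun_gt0_defocusing defoc gt_last lt_bb.
  by have := mu_last_ge j; nra.
- have first_le0 : mu i_first <= 0.
    rewrite leNgt; apply/negP => first_gt0; apply: not_foc => k.
    exact: lt_le_trans first_gt0 (mu_first_le k).
  have := gfun_lt0_below_first lt_first first_le0.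
  by have := mu_first_le j; nra.
Qed.
End GfunSign.

Theorem theorem1p1 (R : realType) (N : nat) (Om : set 'rV[R]_N)
  (omega : 'rV[R]_N -> R) (n : nat) (mu : 'I_n -> R) :
  (N <= 3)%N ->
  open Om -> bounded_set Om -> Om !=set0 -> connected Om ->
  twice_diff_on Om omega -> dirichlet0 Om omega ->
  (forall x, Om x -> 0 < omega x) ->
  (forall x, Om x -> - laplacian omega x - omega x = - omega x ^+ 3) ->
  (3 <= n)%N ->
  (forall i j : 'I_n, (i <= j)%N -> mu i <= mu j) ->
  forall beta : R, in_I mu beta ->
    (forall j, 0 < (beta - mu j) * gfun mu beta) /\
    is_solution Om mu beta (fun j x => alpha_branch mu beta j * omega x) /\
    (forall u : 'I_n -> 'rV[R]_N -> R,
       synchronized omega u -> is_solution Om mu beta u ->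
       u = (fun j x => alpha_branch mu beta j * omega x)).
Proof.
move=> _ _ _ Om_neq0 _ w_diff w_bc w_pos w_eq n_ge3 mu_sorted beta beta_in_I.
have rad_gt0 := alpha_radicand_gt0 n_ge3 mu_sorted beta_in_I.
have mu_beta_neq0 j : mu j - beta != 0.
  by apply/eqP => e; have := rad_gt0 j; rewrite -opprB e oppr0 mul0r ltxx.
have gfun_neq0 : gfun mu beta != 0.
  apply/eqP => e; have := rad_gt0 (Ordinal (leq_trans (isT : (0 < 3)%N) n_ge3)).
  by rewrite e mulr0 ltxx.
have alpha_gt0 j : 0 < alpha_branch mu beta j := powR_gt0 _ (rad_gt0 j).
have alpha_sqr j := alpha_branch_sqr (rad_gt0 j).
have solves_iff := is_solution_scaled w_diff w_bc w_pos w_eq Om_neq0 mu beta.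
split => //; split.
  apply/solves_iff => // j; under eq_bigr do rewrite alpha_sqr.
  by rewrite alpha_sqr alpha2_branch_solves.
move=> u [a [a_gt0 uE]]; have -> : u = (fun j x => a j * omega x) by apply/funext.
move=> /(solves_iff _ a_gt0) a_solves.
have a_sqr := alpha2_branch_unique mu_beta_neq0 gfun_neq0 a_solves.
suff -> : a = alpha_branch mu beta by [].
apply/funext => j; apply/eqP; rewrite -(@eqrXn2 _ 2) ?ltW // alpha_sqr.
by rewrite -(congr1 (fun f => f j) a_sqr).
Qed.
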